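(* Let $\mathcal M=(\{1,\dots,n\}\uplus\{\mathbf{good}\},\mathcal D,\mathbf Q)$ be a CTMDP with absorbing state $\mathbf{good}$, $B>0$, and let $\pi$ be a policy such that, writing $\mathbf d_t:=\pi_{B-t}$ and letting $W^\pi_t$ solve $\frac{d}{dt}W^\pi_t=\mathbf Q^{\mathbf d_t}W^\pi_t$ with $W^\pi_0=\mathbf u(\mathbf{good})$, the decision vector $\mathbf d_t$ maximizes $\mathbf Q^{\mathbf d}W^\pi_t$ (elementwise, over $\mathbf d\in\mathcal D$) for almost all $t\in[0,B]$. Take $t^*$ such that $\mathcal F_{n+2}(W^\pi_{t^*})$ differs from $\lim_{t\uparrow t^*}\mathcal F_{n+2}(W^\pi_t)$, and suppose $\mathcal F_{n+2}(W^\pi_{t^*})=\{\mathbf d^1,\dots,\mathbf d^p\}$ with $p>1$. For $i\in\{1,\dots,p\}$ let $$\Delta_i:=\sup\{\delta>0: \mathbf d^i\in\mathcal F_{n+2}(W^\pi_t)\text{ for all }t\in[t^*,t^*+\delta)\}.$$ Then $\Delta_1=\Delta_2=\dots=\Delta_p$. Moreover, suppose $t^*\le\delta_1<\delta_2<t^*+\Delta_1$ and $\pi_{B-t}=\mathbf d$ for all $t\in[\delta_1,\delta_2)$, for some $\mathbf d\in\mathcal F_{n+1}(W^\pi_{t^*})$. If $\pi'$ is a policy with $\pi'_{B-t}=\pi_{B-t}$ for $t\in[0,\delta_1)$ and $\pi'_{B-t}=\mathbf d'$ for all $t\in[\delta_1,\delta_2)$, for some $\mathbf d'\in\mathcal F_{n+1}(W^\pi_{t^*})\setminus\{\mathbf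 d\}$, then $\pi'$ also has the property that $\pi'_{B-t}$ maximizes $\mathbf Q^{\mathbf d}W^{\pi'}_t$ for almost all $t\in[0,\delta_2)$ (where $W^{\pi'}$ is defined from $\pi'$ in the same way as $W^\pi$ from $\pi$).
   Context: CTMDP: $\mathcal M=(S,\mathcal D,\mathbf Q)$ with finite state set $S$, decision vectors $\mathcal D=\prod_{s\in S}\mathcal D_s$ (finite action sets), and for each $\mathbf d\in\mathcal D$ a generator matrix $\mathbf Q^{\mathbf d}$ (off-diagonal entries $\mathbf Q^{\mathbf d}(s,s')\ge0$ depending only on $\mathbf d(s)$; diagonal entries make row sums zero). A state is absorbing if its row is zero for every $\mathbf d$. A policy is a measurable map $\pi:[0,B]\to\mathcal D$. $\mathbf u(s)$ is the vector with $1$ in coordinate $s$ and $0$ elsewhere. Vector comparisons and maximizations are elementwise. For a vector $W$ define recursively $\mathcal F_1(W)=\{\mathbf d\in\mathcal D:\mathbf d\text{ maximizes }\mathbf Q^{\mathbf d}W\}$ and, for $j\ge2$, $\mathcal F_j(W)=\{\mathbf d\in\mathcal F_{j-1}(W):\mathbf d\text{ maximizes }[\mathbf Q^{\mathbf d}]^jW\text{ over }\mathcal F_{j-1}(W)\}$. *)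

From HB Require Import structures.
From mathcomp Require Import all_boot all_order all_algebra.
From mathcomp Require Import all_classical all_reals all_analysis.
Set Implicit Arguments. Unset Strict Implicit. Unset Printing Implicit Defensive.
Import Order.TTheory GRing.Theory Num.Theory.
Local Open Scope ring_scope.
Local Open Scope classical_set_scope.

(* States {1,...,n} ⊎ {good}: good is None, state i is Some i. *)
Definition state (n : nat) : finType := option 'I_n.
Definition good (n : nat) : state n := None.

Section CTMDP.
Variables (R : realType) (n : nat).
Variable (Act : state n -> finType).
Definition decision := {dffun forall s : state n, Act s}.
(* rate s a s' = off-diagonal generator entry Q(s,s') when action a is chosen in s *)
Variable (rate : forall s : state n, Act s -> state n -> R).

(* the generator matrix Q^d: off-diagonal entries depend only on d(s),
   diagonal entries make the row sums zero *)
Definition genQ (d : decision) (s s' : state n) : R :=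
  if s' == s then - \sum_(s'' | s'' != s) rate (d s) s'' else rate (d s) s'.

Definition Qapp (d : decision) (W : state n -> R) : state n -> R :=
  fun s => \sum_s' genQ d s s' * W s'.

Definition Qpow (d : decision) (j : nat) (W : state n -> R) : state n -> R :=
  iter j (Qapp d) W.

Definition unitv (s0 : state n) : state n -> R := fun s => (s == s0)%:R.

Definition absorbing (s : state n) : Prop := forall d s', genQ d s s' = 0.

Fixpoint Fset (j : nat) (W : state n -> R) : set decision :=
  match j with
  | 0 => setT
  | j'.+1 => [set d | Fset j' W d /\
               forall d', Fset j' W d' -> forall s, Qpow d' j'.+1 W s <= Qpow d j'.+1 W s]
  end.

Definition is_policy (B : R) (pi : R -> decision) : Prop :=
  forall d, measurable [set t | 0 <= t <= B /\ pi t = d].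

(* W solves  d/dt W_t = Q^{pi_{B-t}} W_t, W_0 = u(good)  on [0,B]
   (Caratheodory sense: integral equation with integrable right-hand side) *)
Definition value_sol (B : R) (pi : R -> decision) (W : R -> state n -> R) : Prop :=
  forall s,
    lebesgue_measure.-integrable [set t | 0 <= t <= B]
      (fun t => (Qapp (pi (B - t)) (W t) s)%:E) /\
    forall t, 0 <= t <= B ->
      (W t s)%:E = adde (unitv (good n) s)%:E
        (\int[lebesgue_measure]_(x in [set x | 0 <= x <= t])
           (Qapp (pi (B - x)) (W x) s)%:E).

Definition Delta (B tstar : R) (W : R -> state n -> R) (j : nat) (d : decision) : \bar R :=
  ereal_sup [set delta%:E | delta in
    [set delta | 0 < delta /\
       forall t, tstar <= t < tstar + delta -> t <= B -> Fset j (W t) d]].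

End CTMDP.

From HB Require Import structures.
From mathcomp Require Import all_boot all_order all_algebra.
From mathcomp Require Import all_classical all_reals all_analysis.
From mathcomp Require Import lra ring.
Set Implicit Arguments. Unset Strict Implicit. Unset Printing Implicit Defensive.
Import Order.TTheory GRing.Theory Num.Theory.
Local Open Scope ring_scope.
Local Open Scope classical_set_scope.

(* The heart of the argument (section Window) is: if d1, d2 are both in
   F_{n+1}(W_{t*}) and d1 stays optimal on [t*, T0), then Q^{d2} and Q^{d1}
   give the same [Q^d]^k W_t, k <= n+2, on that window.  Indeed the
   discrepancies (Q^{d2} - Q^{d1}) (Q^{d1})^k W_t, k <= n, vanish at t*, and
   since dW/dt = Q^{d1} W_t a.e. there, they satisfy a closed linear ODE
   (Cayley-Hamilton on the n+1 states), so a Gronwall argument makes them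
   vanish.  From this:
   - all members of F_{n+2}(W_{t*}) remain in F_{n+2} on exactly the same
     windows, hence have equal Delta;
   - switching to d' on [delta1, delta2) changes neither the drift along W nor,
     by uniqueness of solutions, the value function, so optimality persists.
   The file first develops the analytic tools (integral equations, Gronwall),
   then the finite linear algebra (Cayley-Hamilton for operators), the
   selection sets F_j, the window lemma, uniqueness, and finally the theorem. *)

Section IntegralEquation.
Variables (R : realType) (I : finType) (F f : I -> R -> R) (F0 : I -> R) (B : R).
Local Notation mu := (@lebesgue_measure R).
Hypothesis f_int : forall i, mu.-integrable [set x | 0 <= x <= B] (fun x => (f i x)%:E).
Hypothesis F_eq : forall i t, 0 <= t <= B ->
  (F i t)%:E = adde (F0 i)%:E (\int[mu]_(x in [set x | 0 <= x <= t]) (f i x)%:E).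

Lemma measurable_segment (a u : R) : measurable [set x : R | a <= x <= u].
Proof.
by rewrite (_ : [set x | _] = `[a, u]%classic) //; apply/seteqP; split=> x /=; rewrite in_itv.
Qed.

Lemma measurable_halfopen (a u : R) : measurable [set x : R | a < x <= u].
Proof.
by rewrite (_ : [set x | _] = `]a, u]%classic) //; apply/seteqP; split=> x /=; rewrite in_itv.
Qed.

Lemma f_int_within (A : set R) i : measurable A -> A `<=` [set x | 0 <= x <= B] ->
  mu.-integrable A (fun x => (f i x)%:E).
Proof. by move=> mA AB; apply: integrableS (f_int i) => //; exact: measurable_segment. Qed.

Lemma increment_integral i a t : 0 <= a -> a <= t -> t <= B ->
  (F i t - F i a)%:E = (\int[mu]_(x in [set x | (a < x <= t)%R]) (f i x)%:E)%E.
Proof.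
move=> a0 aLt tB.
have int_a : mu.-integrable [set x | 0 <= x <= a] (fun x => (f i x)%:E).
  apply: f_int_within; first exact: measurable_segment.
  by move=> x /= /andP[-> xa]; rewrite (le_trans xa (le_trans aLt tB)).
have int_at : mu.-integrable [set x | a < x <= t] (fun x => (f i x)%:E).
  apply: f_int_within; first exact: measurable_halfopen.
  by move=> x /= /andP[/ltW ax xt]; rewrite (le_trans a0 ax) (le_trans xt tB).
have split_t : [set x | 0 <= x <= t] = [set x | 0 <= x <= a] `|` [set x | a < x <= t].
  apply/seteqP; split=> x /=.
    by move=> /andP[x0 xt]; case: (leP x a) => xa; [left|right]; rewrite ?x0 ?xa ?xt.
  case=> /andP[]; first by move=> -> xa; rewrite (le_trans xa aLt).
  by move=> ax ->; rewrite (le_trans a0 (ltW ax)).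
have := @F_eq i t; rewrite (le_trans a0 aLt) tB => /(_ isT).
rewrite split_t integral_setU; first last.
- apply/disj_setPS => x [] /= /andP[_ xa] /andP[ax _].
  by move: (lt_le_trans ax xa); rewrite ltxx.
- by rewrite -split_t; apply: measurable_int; apply: f_int_within;
    [exact: measurable_segment|move=> x /= /andP[-> xt]; rewrite (le_trans xt tB)].
- exact: measurable_halfopen.
- exact: measurable_segment.
have := @F_eq i a; rewrite a0 (le_trans aLt tB) => /(_ isT).
have fin_a : ((\int[mu]_(x in [set x | (0 <= x <= a)%R]) (f i x)%:E) \is a fin_num)%E.
  by apply: integrable_fin_num int_a; exact: measurable_segment.
have fin_at : ((\int[mu]_(x in [set x | (a < x <= t)%R]) (f i x)%:E) \is a fin_num)%E.
  by apply: integrable_fin_num int_at; exact: measurable_halfopen.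
rewrite -(fineK fin_a) -(fineK fin_at) -!EFinD.
move=> ha ht; have {}ha := EFin_inj ha; have {}ht := EFin_inj ht.
by congr (_%:E); rewrite ht ha; ring.
Qed.

Lemma increment_bound (c : I -> R) a t K : 0 <= a -> a <= t -> t <= B -> 0 <= K ->
  {ae mu, forall x, a < x <= t -> `|\sum_i c i * f i x| <= K} ->
  `|\sum_i c i * (F i t - F i a)| <= K * (t - a).
Proof.
move=> a0 aLt tB K0 hae.
have int_at i : mu.-integrable [set x | a < x <= t] (fun x => (f i x)%:E).
  apply: f_int_within; first exact: measurable_halfopen.
  by move=> x /= /andP[/ltW ax xt]; rewrite (le_trans a0 ax) (le_trans xt tB).
have int_comb : mu.-integrable [set x | a < x <= t] (fun x => (\sum_i c i * f i x)%:E).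
  rewrite (_ : (fun x => _) = (fun x => \sum_i ((c i)%:E * (f i x)%:E))%E); last first.
    by apply/funext => x; rewrite sumEFin.
  apply: integrable_sum; first exact: measurable_halfopen.
  by move=> i _; apply: integrableZl; [exact: measurable_halfopen|exact: int_at].
have comb_eq : ((\sum_i c i * (F i t - F i a))%:E =
    \int[mu]_(x in [set x | (a < x <= t)%R]) (\sum_i c i * f i x)%:E)%E.
  rewrite -sumEFin (eq_bigr (fun i =>
    \int[mu]_(x in [set x | (a < x <= t)%R]) ((c i)%:E * (f i x)%:E))%E); last first.
    move=> i _; rewrite EFinM increment_integral // -integralZl //.
    exact: measurable_halfopen.
  rewrite -integral_sum; [|exact: measurable_halfopen|]; last first.
    by move=> i; apply: integrableZl; [exact: measurable_halfopen|exact: int_at].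
  by apply: eq_integral => x _; rewrite -sumEFin.
have len : mu [set x | a < x <= t] = (t - a)%:E.
  rewrite (_ : [set x | _] = `]a, t]%classic); last first.
    by apply/seteqP; split=> x /=; rewrite in_itv.
  rewrite lebesgue_measure_itv /= lte_fin; case: ltP => [_|ta]; first by rewrite -EFinB.
  by rewrite (_ : t = a) ?subrr //; apply/le_anti; rewrite aLt ta.
rewrite -lee_fin -abse_EFin comb_eq.
have m_comb := measurable_int _ int_comb.
apply: le_trans (le_abse_integral _ _ m_comb) _; first exact: measurable_halfopen.
apply: le_trans (integral_le_bound K%:E _ m_comb _ _) _.
- exact: measurable_halfopen.
- by rewrite lee_fin.
- apply: (filterS _ hae); first exact: (ae_filter_ringOfSetsType mu).
  by move=> x h /h; rewrite abse_EFin lee_fin.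
by rewrite EFinM -len.
Qed.

Lemma solution_bounded : exists M, 0 <= M /\ forall i t, 0 <= t <= B -> `|F i t| <= M.
Proof.
pose g i := fine (\int[mu]_(x in [set x | (0 <= x <= B)%R]) `|(f i x)%:E|)%E.
have g0 i : 0 <= g i by apply/fine_ge0/integral_ge0 => x _; exact: abse_ge0.
exists (\sum_i (`|F0 i| + g i)); split; first by apply: sumr_ge0 => i _; apply: addr_ge0.
move=> i t /andP[t0 tB].
have sub_t : [set x | 0 <= x <= t] `<=` [set x | 0 <= x <= B].
  by move=> x /= /andP[-> xt]; rewrite (le_trans xt tB).
have gfin : ((\int[mu]_(x in [set x | (0 <= x <= B)%R]) `|(f i x)%:E|) \is a fin_num)%E.
  rewrite ge0_fin_numE; last by apply: integral_ge0 => x _; exact: abse_ge0.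
  by case/integrableP: (f_int i).
apply: (@le_trans _ _ (`|F0 i| + g i)); last first.
  by rewrite (bigD1 i) //= lerDl; apply: sumr_ge0 => j _; exact: addr_ge0.
rewrite -lee_fin -abse_EFin (F_eq i) ?t0 ?tB //.
apply: le_trans (lee_abs_add _ _) _; rewrite EFinD abse_EFin; apply: leeD2l.
apply: le_trans (le_abse_integral _ _ _) _; first exact: measurable_segment.
  by apply: measurable_int; apply: f_int_within sub_t; exact: measurable_segment.
rewrite /g fineK //; apply: ge0_subset_integral => //; try exact: measurable_segment.
by apply: (measurable_int mu); apply: integrable_abse; exact: f_int.
Qed.

End IntegralEquation.

(* A Gronwall-type uniqueness principle for a finite family y of functions on
   [a, ...) (restricted by a downward closed predicate P): if the family is
   bounded and, on every interval where it is bounded by K, its increments grow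
   at most like C K (t - a'), then vanishing at a forces vanishing everywhere.
   The proof bounds y by M / 2^m on windows of length 1 / (2 (C + 1)). *)
Section Gronwall.
Variables (R : realType) (I : finType) (y : I -> R -> R) (a M C : R) (P : R -> Prop).
Hypothesis P_down : forall x t, a <= x -> x <= t -> P t -> P x.
Hypotheses (M_ge0 : 0 <= M) (C_ge0 : 0 <= C).
Hypothesis y_bounded : forall i t, a <= t -> P t -> `|y i t| <= M.
Hypothesis y_increment : forall a' t K, a <= a' -> a' <= t -> P t -> 0 <= K ->
  (forall j x, a' <= x -> x <= t -> `|y j x| <= K) ->
  forall i, `|y i t - y i a'| <= C * K * (t - a').

Lemma vanish_by_halving (z : R) : (forall m : nat, `|z| <= M / 2 ^+ m) -> z = 0.
Proof.
move=> small; apply/normr0_eq0/eqP; rewrite eq_le normr_ge0 andbT leNgt.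
apply/negP => z_gt0.
have := archi_boundP (divr_ge0 M_ge0 (normr_ge0 z)); set m := Num.bound _.
rewrite ltr_pdivrMr // => M_lt.
have m_lt : (m%:R : R) < 2 ^+ m by rewrite -natrX ltr_nat ltn_expl.
have := small m; rewrite ler_pdivlMr ?exprn_gt0 // => z_ge.
have : `|z| * m%:R < `|z| * 2 ^+ m by rewrite ltr_pM2l.
by rewrite mulrC in M_lt; lra.
Qed.

(* On a window of length at most 1 / (2 C) starting at a zero of the family,
   each bound K improves to K / 2, so the family vanishes there. *)
Lemma vanish_on_short_window a' t : a <= a' -> a' <= t -> P t ->
  C * (t - a') <= 2^-1 -> (forall j, y j a' = 0) -> forall i, y i t = 0.
Proof.
move=> aa' a't Pt short y_a' i.
have bound m : forall j x, a' <= x -> x <= t -> `|y j x| <= M / 2 ^+ m.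
  elim: m => [|m IHm] j x a'x xt; have Px : P x by exact: P_down (le_trans aa' a'x) xt Pt.
    by rewrite expr0 divr1; exact: y_bounded (le_trans aa' a'x) Px.
  have K_ge0 : 0 <= M / 2 ^+ m by rewrite divr_ge0 // exprn_ge0.
  have := y_increment aa' a'x Px K_ge0 (fun j' x' h1 h2 => IHm j' x' h1 (le_trans h2 xt)) j.
  rewrite y_a' subr0 => /le_trans; apply.
  have Cx : C * (x - a') <= 2^-1 by apply: le_trans short; apply: ler_wpM2l => //; lra.
  have -> : M / 2 ^+ m.+1 = 2^-1 * (M / 2 ^+ m) by rewrite exprS invfM mulrCA.
  by rewrite mulrAC; apply: ler_wpM2r.
exact: vanish_by_halving (fun m => bound m i t a't (lexx t)).
Qed.

(* Covering [a, t] by finitely many short windows. *)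
Lemma gronwall_vanish : (forall i, y i a = 0) -> forall i t, a <= t -> P t -> y i t = 0.
Proof.
move=> y_a.
pose h := (2 * (C + 1))^-1.
have h_gt0 : 0 < h by rewrite /h invr_gt0; have := C_ge0; lra.
have Ch : C * h <= 2^-1.
  rewrite /h ler_pdivrMr; last by have := C_ge0; lra.
  by rewrite mulrA mulVf ?mul1r; have := C_ge0; lra.
have windows k : forall i t, a <= t -> t <= a + k%:R * h -> P t -> y i t = 0.
  elim: k => [|k IH] i t at_ th Pt.
    by rewrite mul0r addr0 in th; rewrite (_ : t = a) //; apply/le_anti; rewrite th.
  have kh : 0 <= k%:R * h by rewrite mulr_ge0 // ltW.
  case: (leP t (a + k%:R * h)) => tk; first exact: IH.
  apply: (@vanish_on_short_window (a + k%:R * h)) => //; first by rewrite lerDl.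
  - exact: ltW.
  - apply: le_trans Ch; apply: ler_wpM2l => //.
    by move: th; rewrite -nat1r mulrDl mul1r; lra.
  - move=> j; apply: IH; rewrite ?lerDl //.
    by apply: P_down (ltW tk) Pt; rewrite lerDl.
move=> i t at_ Pt.
have q_ge0 : 0 <= (t - a) / h by rewrite divr_ge0 ?subr_ge0 // ltW.
have := archi_boundP q_ge0; rewrite ltr_pdivrMr // => hk.
by apply: (windows (Num.bound ((t - a) / h))) => //; lra.
Qed.

End Gronwall.

Section FiniteOperators.
Context {R : comNzRingType} {T : finType}.

Definition linop (X : T -> T -> R) (v : T -> R) : T -> R := fun s => \sum_s' X s s' * v s'.

Definition matmul (X Y : T -> T -> R) : T -> T -> R := fun s s'' => \sum_s' X s s' * Y s' s''.

Lemma linop_matmul X Y v : linop (matmul X Y) v = linop X (linop Y v).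
Proof.
apply/funext => s; rewrite /linop /matmul.
under eq_bigr do rewrite mulr_suml.
rewrite exchange_big /=; apply: eq_bigr => s' _.
by rewrite mulr_sumr; apply: eq_bigr => s'' _; rewrite mulrA.
Qed.

Lemma linop_sub_r X u v s : linop X u s - linop X v s = linop X (fun s' => u s' - v s') s.
Proof. by rewrite /linop -sumrB; apply: eq_bigr => s' _; rewrite mulrBr. Qed.

Lemma linop_sum X (I : finType) (c : I -> R) (u : I -> T -> R) s :
  linop X (fun s' => \sum_i c i * u i s') s = \sum_i c i * linop X (u i) s.
Proof.
rewrite /linop; under eq_bigr do rewrite mulr_sumr.
rewrite exchange_big /=; apply: eq_bigr => i _.
by rewrite mulr_sumr; apply: eq_bigr => s' _; rewrite mulrCA.
Qed.

Lemma linop_cayley_hamilton A N : #|T| = N.+1 -> exists c : nat -> R, forall v s,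
  iter N.+1 (linop A) v s = \sum_(k < N.+1) c k * iter k (linop A) v s.
Proof.
move=> cardT.
pose ev i := enum_val (cast_ord (esym cardT) i).
pose er s := cast_ord cardT (enum_rank s).
have evK : cancel ev er by move=> i; rewrite /ev /er enum_valK cast_ordKV.
have erK : cancel er ev by move=> s; rewrite /ev /er cast_ordK enum_rankK.
pose M : 'M[R]_N.+1 := \matrix_(i, j) A (ev i) (ev j).
have powM k v i : (M ^+ k *m \col_j v (ev j)) i 0 = iter k (linop A) v (ev i).
  elim: k v i => [|k IH] v i; first by rewrite expr0 mul1mx mxE.
  rewrite exprS -mulmxA mxE iterS /linop (reindex ev) /=; last by exists er.
  by apply: eq_bigr => j _; rewrite mxE IH.
pose p := char_poly M.
have p_monic : p`_N.+1 = 1.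
  by have := char_poly_monic M; move/monicP; rewrite lead_coefE size_char_poly.
have hornerM : horner_mx M p = \sum_(i < N.+2) p`_i *: M ^+ i.
  rewrite -{1}[p]coefK poly_def size_char_poly rmorph_sum; apply: eq_bigr => i _.
  by rewrite -mul_polyC rmorphM /= horner_mx_C rmorphXn /= horner_mx_X [_ * _]mul_scalar_mx.
have CH := Cayley_Hamilton M.
rewrite -/p hornerM big_ord_recr /= p_monic scale1r in CH.
have topM : M ^+ N.+1 = - \sum_(i < N.+1) p`_i *: M ^+ i.
  by apply/eqP; rewrite -addr_eq0 addrC CH.
exists (fun k => - p`_k) => v s.
rewrite -(erK s) -powM topM mulNmx mulmx_suml mxE summxE -sumrN.
by apply: eq_bigr => k _; rewrite -scalemxAl mxE powM mulNr.
Qed.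

Lemma sum_indicator (s : T) (X : T -> R) : \sum_s' (s' == s)%:R * X s' = X s.
Proof.
rewrite (bigD1 s) //= eqxx mul1r big1 ?addr0 // => s' /negbTE ->.
exact: mul0r.
Qed.

Definition leftpow (D A : T -> T -> R) (k : nat) : T -> T -> R := iter k (fun X => matmul X A) D.

Lemma linop_leftpow D A k v : linop (leftpow D A k) v = linop D (iter k (linop A) v).
Proof.
elim: k v => [|k IH] v //.
by rewrite /leftpow iterS -/(leftpow D A k) linop_matmul IH -iterSr.
Qed.

Lemma linop_leftpowS D A k v : linop (leftpow D A k) (linop A v) = linop (leftpow D A k.+1) v.
Proof. by rewrite !linop_leftpow iterSr. Qed.

Lemma leftpow_cayley_hamilton D A N : #|T| = N.+1 -> exists c : nat -> R, forall v s,
  linop (leftpow D A N.+1) v s = \sum_(k < N.+1) c k * linop (leftpow D A k) v s.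
Proof.
move=> /(linop_cayley_hamilton A) [c CH]; exists c => v s.
rewrite linop_leftpow (_ : iter N.+1 _ v = fun s' => \sum_(k < N.+1) c k * iter k (linop A) v s').
  by rewrite linop_sum; apply: eq_bigr => k _; rewrite linop_leftpow.
by apply/funext => s'; exact: CH.
Qed.

End FiniteOperators.

Lemma linop_norm_bound (R : numDomainType) (T : finType) (X : T -> T -> R) v K s :
  (forall s', `|v s'| <= K) -> `|linop X v s| <= (\sum_s' `|X s s'|) * K.
Proof.
move=> vK; rewrite mulr_suml; apply: le_trans (ler_norm_sum _ _ _) _.
by apply: ler_sum => s' _; rewrite normrM; apply: ler_wpM2l.
Qed.

Section LeftPowerBound.
Variables (R : numDomainType) (T : finType) (D A : T -> T -> R) (N : nat).
Hypothesis cardT : #|T| = N.+1.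

(* A uniform bound on the vectors D A^k v (k <= N) gives a proportional bound
   on D A^(k+1) v, by Cayley-Hamilton for k = N. *)
Lemma leftpow_step_bound : exists C : R, 0 <= C /\ forall v K,
  (forall (j : 'I_N.+1) s, `|linop (leftpow D A j) v s| <= K) ->
  forall (k : 'I_N.+1) s, `|linop (leftpow D A k.+1) v s| <= C * K.
Proof.
have [c CH] := leftpow_cayley_hamilton D A cardT.
pose C := 1 + \sum_(k < N.+1) `|c k|.
have C1 : 1 <= C by rewrite /C lerDl sumr_ge0.
exists C; split; first exact: le_trans C1.
move=> v K bound k s; have K0 : 0 <= K := le_trans (normr_ge0 _) (bound ord0 s).
case: (ltnP k N) => kN.
  apply: le_trans (bound (Ordinal (kN : k.+1 < N.+1)%N) s) _.
  by rewrite -{1}[K]mul1r; apply: ler_wpM2r.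
have -> : k.+1 = N.+1 by apply/eqP; rewrite eqSS eqn_leq kN -ltnS ltn_ord.
rewrite CH; apply: le_trans (ler_norm_sum _ _ _) _.
apply: (@le_trans _ _ (\sum_(j < N.+1) `|c j| * K)).
  by apply: ler_sum => j _; rewrite normrM; apply: ler_wpM2l.
by rewrite -mulr_suml; apply: ler_wpM2r => //; rewrite /C lerDr.
Qed.

End LeftPowerBound.

Section SelectionSets.
Variables (R : realType) (n : nat) (Act : state n -> finType)
  (rate : forall s : state n, Act s -> state n -> R).
Local Notation Fset := (Fset rate).
Local Notation Qpow := (Qpow rate).

Lemma Fset_sub j W d : Fset j.+1 W d -> Fset j W d.
Proof. by case. Qed.

Lemma Fset_le j k W d : (k <= j)%N -> Fset j W d -> Fset k W d.
Proof.
elim: j => [|j IH]; first by rewrite leqn0 => /eqP ->.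
by rewrite leq_eqVlt => /orP[/eqP -> //|kj] /Fset_sub; exact: IH.
Qed.

Lemma Fset_Qpow_eq j W d1 d2 : Fset j W d1 -> Fset j W d2 ->
  forall k, (k <= j)%N -> Qpow d1 k W = Qpow d2 k W.
Proof.
elim: j => [|j IH] h1 h2 k; first by rewrite leqn0 => /eqP ->.
rewrite leq_eqVlt => /orP[/eqP ->|kj]; last exact: (IH (Fset_sub h1) (Fset_sub h2) k kj).
case: h1 h2 => [f1 g1] [f2 g2].
by apply/funext => s; apply/le_anti; rewrite g1 // g2.
Qed.

Lemma Fset_of_Qpow_eq j W d1 d2 :
  (forall k, (k <= j)%N -> Qpow d1 k W = Qpow d2 k W) -> Fset j W d1 -> Fset j W d2.
Proof.
elim: j => [|j IH] eq12 // [f1 g1]; split.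
  by apply: IH f1 => k kj; apply: eq12; exact: ltnW.
by move=> d' f' s; rewrite -(eq12 j.+1) //; exact: g1.
Qed.

Lemma Fset1_Qapp W d1 d2 : Fset 1 W d1 -> Fset 1 W d2 -> Qapp rate d1 W = Qapp rate d2 W.
Proof. by move=> h1 h2; exact: (Fset_Qpow_eq h1 h2 (leqnn 1)). Qed.

End SelectionSets.

Section ValueFunction.
Variables (R : realType) (n : nat) (Act : state n -> finType)
  (rate : forall s : state n, Act s -> state n -> R).
Local Notation st := (state n).
Local Notation dec := (decision Act).
Local Notation mu := (@lebesgue_measure R).

Lemma card_state : #|{: st}| = n.+1.
Proof. by rewrite card_option card_ord. Qed.

Lemma value_sol_at0 B pi W : 0 <= B -> value_sol rate B pi W ->
  forall s, W 0 s = unitv R (good n) s.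
Proof.
move=> B0 sol s; have := (sol s).2 0; rewrite lexx B0 => /(_ isT).
rewrite (@integral_Sset1 _ _ _ 0); last by move=> x /= /andP[x0 x0']; apply/le_anti; rewrite x0 x0'.
by move=> h; apply: EFin_inj; rewrite h /adde /= addr0.
Qed.

Lemma value_sol_bounded B pi W : value_sol rate B pi W ->
  exists M, 0 <= M /\ forall s t, 0 <= t <= B -> `|W t s| <= M.
Proof.
move=> sol.
exact: (@solution_bounded R _ (fun s t => W t s) _ _ B (fun s => (sol s).1) (fun s => (sol s).2)).
Qed.

(* Let d1, d2 be in F_{n+1}(W_{t*}) and let d1 be optimal
   (in F_1) on the window [t*, T0).  Then dW/dt = Q^{d1} W a.e. on the window, so
   the discrepancies D A^k W_t with D = Q^{d2} - Q^{d1}, A = Q^{d1}, k <= n,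
   form a closed linear system (by Cayley-Hamilton in dimension n+1) that
   vanishes at t*; by Gronwall it vanishes on the whole window. *)
Section Window.
Variables (B : R) (pi : R -> dec) (W : R -> st -> R).
Hypothesis W_sol : value_sol rate B pi W.
Hypothesis pi_opt : {ae mu, forall t : R, 0 <= t <= B -> Fset rate 1 (W t) (pi (B - t))}.
Variables (tstar T0 : R) (d1 d2 : dec).
Hypothesis tstar_ge0 : 0 <= tstar.
Hypotheses (d1_F : Fset rate n.+1 (W tstar) d1) (d2_F : Fset rate n.+1 (W tstar) d2).
Hypothesis d1_opt : forall t, tstar <= t -> t < T0 -> t <= B -> Fset rate 1 (W t) d1.

Definition gap : st -> st -> R := fun s s' => genQ rate d2 s s' - genQ rate d1 s s'.

Lemma linop_gap u s : linop gap u s = Qapp rate d2 u s - Qapp rate d1 u s.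
Proof. by rewrite /linop /Qapp -sumrB; apply: eq_bigr => s' _; rewrite mulrBl. Qed.

Definition discrepancy (i : 'I_n.+1 * st) (t : R) : R :=
  linop (leftpow gap (genQ rate d1) i.1) (W t) i.2.

(* At t* the discrepancies vanish, since d1, d2 agree on [Q^d]^k W up to k = n+1. *)
Lemma discrepancy_at_tstar i : discrepancy i tstar = 0.
Proof.
case: i => k s; rewrite /discrepancy /= linop_leftpow linop_gap.
have eq12 := Fset_Qpow_eq d1_F d2_F.
change (Qapp rate d2 (Qpow rate d1 k (W tstar)) s - Qpow rate d1 k.+1 (W tstar) s = 0).
rewrite (eq12 k) ?(ltnW (ltn_ord k)) //.
by change (Qpow rate d2 k.+1 (W tstar) s - Qpow rate d1 k.+1 (W tstar) s = 0);
  rewrite (eq12 k.+1) ?subrr.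
Qed.

(* The derivative of the k-th discrepancy is the (k+1)-th one, which is
   controlled by all the discrepancies. *)
Lemma discrepancy_increment C : 0 <= C ->
  (forall v K, (forall (j : 'I_n.+1) s, `|linop (leftpow gap (genQ rate d1) j) v s| <= K) ->
     forall (k : 'I_n.+1) s, `|linop (leftpow gap (genQ rate d1) k.+1) v s| <= C * K) ->
  forall a' t K, tstar <= a' -> a' <= t -> t < T0 /\ t <= B -> 0 <= K ->
  (forall j x, a' <= x -> x <= t -> `|discrepancy j x| <= K) ->
  forall i, `|discrepancy i t - discrepancy i a'| <= C * K * (t - a').
Proof.
move=> C0 C_step a' t K ta' a't [tT tB] K0 bound [k s].
have -> : discrepancy (k, s) t - discrepancy (k, s) a' =
    \sum_s' leftpow gap (genQ rate d1) k s s' * (W t s' - W a' s').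
  by rewrite /discrepancy /linop /= -sumrB; apply: eq_bigr => s' _; rewrite mulrBr.
apply: (@increment_bound R _ (fun s t => W t s) (fun s x => Qapp rate (pi (B - x)) (W x) s)
  _ B (fun s => (W_sol s).1) (fun s => (W_sol s).2)); rewrite ?mulr_ge0 //.
  exact: le_trans ta'.
apply: (filterS _ pi_opt); first exact: (ae_filter_ringOfSetsType mu).
move=> x x_opt /andP[a'x xt].
have x_win : tstar <= x by exact/ltW/(le_lt_trans ta' a'x).
have x_pi : Fset rate 1 (W x) (pi (B - x)).
  by apply: x_opt; rewrite (le_trans tstar_ge0 x_win) (le_trans xt tB).
rewrite (Fset1_Qapp x_pi (d1_opt x_win (le_lt_trans xt tT) (le_trans xt tB))).
rewrite -[X in `|X|]/(linop _ (linop (genQ rate d1) (W x)) s) linop_leftpowS.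
by apply: C_step => j s'; exact: (bound (j, s') x (ltW a'x) xt).
Qed.

Lemma discrepancy_vanishes i t : tstar <= t -> t < T0 -> t <= B -> discrepancy i t = 0.
Proof.
have [C [C0 C_step]] := leftpow_step_bound gap (genQ rate d1) card_state.
have [Mw [Mw0 W_bound]] := value_sol_bounded W_sol.
pose M := \sum_(j : 'I_n.+1 * st) (\sum_s' `|leftpow gap (genQ rate d1) j.1 j.2 s'|) * Mw.
move=> ts tT tB; apply: (@gronwall_vanish R _ discrepancy tstar M C (fun t => t < T0 /\ t <= B)).
- by move=> x t' _ xt [t'T t'B]; split; [exact: le_lt_trans t'T|exact: le_trans t'B].
- by apply: sumr_ge0 => j _; rewrite mulr_ge0 ?sumr_ge0.
- exact: C0.
- move=> j t' st' [_ t'B]; apply: le_trans (linop_norm_bound _ _ _) _.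
    by move=> s'; apply: W_bound; rewrite (le_trans tstar_ge0 st') t'B.
  rewrite /M (bigD1 j) //= lerDl.
  by apply: sumr_ge0 => j' _; rewrite mulr_ge0 ?sumr_ge0.
- exact: discrepancy_increment.
- exact: discrepancy_at_tstar.
- exact: ts.
- by split.
Qed.

Lemma window_same_powers t : tstar <= t -> t < T0 -> t <= B ->
  forall k, (k <= n.+2)%N -> Qpow rate d2 k (W t) = Qpow rate d1 k (W t).
Proof.
move=> ts tT tB; elim=> [|k IH] kn //.
change (Qapp rate d2 (Qpow rate d2 k (W t)) = Qapp rate d1 (Qpow rate d1 k (W t))).
rewrite IH ?(ltnW kn) //.
apply/funext => s; apply/eqP; rewrite -subr_eq0 -linop_gap.
change (linop gap (iter k (linop (genQ rate d1)) (W t)) s == 0); rewrite -linop_leftpow.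
have [k_lt|k_ge] := ltnP k n.+1.
  by apply/eqP; exact: (discrepancy_vanishes (Ordinal k_lt, s)).
have -> : k = n.+1 by apply/eqP; rewrite eqn_leq k_ge -ltnS kn.
have [c CH] := leftpow_cayley_hamilton gap (genQ rate d1) card_state.
rewrite CH big1 // => j _.
by have := discrepancy_vanishes (j, s) ts tT tB; rewrite /discrepancy /= => ->; rewrite mulr0.
Qed.

Lemma window_Fset j t : (j <= n.+2)%N -> tstar <= t -> t < T0 -> t <= B ->
  Fset rate j (W t) d1 -> Fset rate j (W t) d2.
Proof.
move=> jn ts tT tB; apply: Fset_of_Qpow_eq => k kj.
by rewrite (window_same_powers ts tT tB) // (leq_trans kj jn).
Qed.

End Window.
End ValueFunction.

(* Two value functions whose policies have the same drift along W a.e. on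
   [0, T1) coincide on [0, T1): their difference solves a linear equation
   with bounded coefficients and starts at 0. *)
Section Uniqueness.
Variables (R : realType) (n : nat) (Act : state n -> finType)
  (rate : forall s : state n, Act s -> state n -> R).
Local Notation st := (state n).
Local Notation dec := (decision Act).
Local Notation mu := (@lebesgue_measure R).
Variables (B T1 : R) (pi pi' : R -> dec) (W W' : R -> st -> R).
Hypotheses (W_sol : value_sol rate B pi W) (W'_sol : value_sol rate B pi' W').
Hypothesis T1B : T1 <= B.
Hypothesis same_drift : {ae mu, forall x, 0 < x < T1 ->
  Qapp rate (pi' (B - x)) (W x) = Qapp rate (pi (B - x)) (W x)}.

Definition max_row_norm : R := \sum_(e : dec) \sum_s \sum_s' `|genQ rate e s s'|.

Lemma max_row_norm_ge0 : 0 <= max_row_norm.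
Proof. by do 3 (apply: sumr_ge0 => ? _). Qed.

Lemma row_norm_le e s : \sum_s' `|genQ rate e s s'| <= max_row_norm.
Proof.
have sum_ge0 (e' : dec) s' : 0 <= \sum_s'' `|genQ rate e' s' s''| by exact: sumr_ge0.
apply: (@le_trans _ _ (\sum_s' \sum_s'' `|genQ rate e s' s''|)).
  by rewrite [leRHS](bigD1 s) //= lerDl; apply: sumr_ge0.
by rewrite /max_row_norm [leRHS](bigD1 e) //= lerDl; apply: sumr_ge0 => e' _; exact: sumr_ge0.
Qed.

Lemma value_gap_increment a' t K s : 0 <= a' -> a' <= t -> t < T1 -> 0 <= K ->
  (forall s' x, a' <= x -> x <= t -> `|W' x s' - W x s'| <= K) ->
  `|(W' t s - W t s) - (W' a' s - W a' s)| <= max_row_norm * K * (t - a').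
Proof.
move=> a'0 a't tT K0 bound.
pose F (i : st + st) u := match i with inl s' => W' u s' | inr s' => W u s' end.
pose f (i : st + st) x := match i with
  | inl s' => Qapp rate (pi' (B - x)) (W' x) s' | inr s' => Qapp rate (pi (B - x)) (W x) s' end.
pose c (i : st + st) : R := match i with inl s' => (s' == s)%:R | inr s' => - (s' == s)%:R end.
have pick_s (X : st + st -> R) : \sum_i c i * X i = X (inl s) - X (inr s).
  rewrite big_sumType /=; under [X in _ + X]eq_bigr do rewrite mulNr.
  by rewrite sumrN !sum_indicator.
have := @increment_bound R _ F f
  (fun i => unitv R (good n) (match i with inl s' => s' | inr s' => s' end))
  B (ltac:(by case=> s'; [exact: (W'_sol s').1|exact: (W_sol s').1]))
  (ltac:(by case=> s' u hu; [exact: (W'_sol s').2|exact: (W_sol s').2]))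
  c a' t (max_row_norm * K) a'0 a't (le_trans (ltW tT) T1B).
have drift_bound : {ae mu, forall x, a' < x <= t -> `|\sum_i c i * f i x| <= max_row_norm * K}.
  apply: (filterS _ same_drift); first exact: (ae_filter_ringOfSetsType mu).
  move=> x drift /andP[a'x xt]; rewrite pick_s /f.
  rewrite -(drift _); last by rewrite (le_lt_trans a'0 a'x) (le_lt_trans xt tT).
  have -> : Qapp rate (pi' (B - x)) (W' x) s - Qapp rate (pi' (B - x)) (W x) s =
      linop (genQ rate (pi' (B - x))) (fun s' => W' x s' - W x s') s by exact: linop_sub_r.
  apply: le_trans (linop_norm_bound _ _ _) _.
    by move=> s'; apply: bound => //; exact: ltW.
  by apply: ler_wpM2r => //; exact: row_norm_le.
move=> /(_ (mulr_ge0 max_row_norm_ge0 K0) drift_bound); rewrite pick_s /F.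
by rewrite (_ : W' t s - W t s - _ = W' t s - W' a' s - (W t s - W a' s)) //; ring.
Qed.

Lemma value_sol_unique s t : 0 <= B -> 0 <= t -> t < T1 -> W' t s = W t s.
Proof.
move=> B0 t0 tT; apply/eqP; rewrite -subr_eq0; apply/eqP.
have [M [M0 W_bound]] := value_sol_bounded W_sol.
have [M' [M0' W'_bound]] := value_sol_bounded W'_sol.
apply: (@gronwall_vanish R _ (fun s t => W' t s - W t s) 0 (M' + M) max_row_norm
  (fun t => t < T1)) => //.
- by move=> x t' _ xt; apply: le_lt_trans.
- exact: addr_ge0.
- exact: max_row_norm_ge0.
- move=> s' t' t'0 t'T; apply: le_trans (ler_normB _ _) _.
  have t'B : 0 <= t' <= B by rewrite t'0 (le_trans (ltW t'T) T1B).
  by apply: lerD; [exact: W'_bound|exact: W_bound].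
- by move=> a' t' K a'0 a't t'T K0 bound s'; exact: value_gap_increment.
- by move=> s'; rewrite (value_sol_at0 B0 W_sol) (value_sol_at0 B0 W'_sol) subrr.
Qed.

End Uniqueness.

Section MainArgument.
Variables (R : realType) (n : nat) (Act : state n -> finType)
  (rate : forall s : state n, Act s -> state n -> R).
Local Notation dec := (decision Act).
Local Notation mu := (@lebesgue_measure R).
Variables (B : R) (pi : R -> dec) (W : R -> state n -> R).
Hypothesis W_sol : value_sol rate B pi W.
Hypothesis pi_opt : {ae mu, forall t : R, 0 <= t <= B -> Fset rate 1 (W t) (pi (B - t))}.
Variable tstar : R.
Hypothesis tstar_ge0 : 0 <= tstar.

Definition stays_in (j : nat) (d : dec) (delta : R) : Prop :=
  0 < delta /\ forall t, tstar <= t < tstar + delta -> t <= B -> Fset rate j (W t) d.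

Lemma stays_in_le j k d delta : (k <= j)%N -> stays_in j d delta -> stays_in k d delta.
Proof. by move=> kj [delta_gt0 stay]; split=> // t tw tB; exact: Fset_le kj (stay t tw tB). Qed.

Lemma stays_in_transfer j e1 e2 delta : (0 < j <= n.+2)%N ->
  Fset rate n.+1 (W tstar) e1 -> Fset rate n.+1 (W tstar) e2 ->
  stays_in j e1 delta -> stays_in j e2 delta.
Proof.
move=> /andP[j_gt0 jn] e1_F e2_F [delta_gt0 stay]; split=> // t /andP[ts td] tB.
have e1_opt x : tstar <= x -> x < tstar + delta -> x <= B -> Fset rate 1 (W x) e1.
  by move=> xs xd xB; apply: Fset_le j_gt0 _; apply: stay; rewrite ?xs.
apply: (window_Fset W_sol pi_opt tstar_ge0 e1_F e2_F e1_opt jn ts td tB).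
by apply: stay; rewrite ?ts.
Qed.

Lemma Delta_same e1 e2 : Fset rate n.+2 (W tstar) e1 -> Fset rate n.+2 (W tstar) e2 ->
  Delta rate B tstar W n.+2 e1 = Delta rate B tstar W n.+2 e2.
Proof.
move=> e1_F e2_F; rewrite /Delta; congr ereal_sup; apply/seteqP.
have jn : (0 < n.+2 <= n.+2)%N by rewrite leqnn.
have [F1 F2] := (Fset_sub e1_F, Fset_sub e2_F).
by split=> _ [delta stay <-]; exists delta => //;
  [exact: stays_in_transfer jn F1 F2 stay|exact: stays_in_transfer jn F2 F1 stay].
Qed.

Lemma Delta_witness j d x : (x%:E < tstar%:E + Delta rate B tstar W j d)%E ->
  exists2 delta, stays_in j d delta & x - tstar < delta.
Proof.
have witness y : (y%:E < Delta rate B tstar W j d)%E ->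
    exists2 delta, stays_in j d delta & y < delta.
  by move=> /ereal_sup_gt[_ [delta stay <-]]; rewrite lte_fin => y_lt; exists delta.
case E : (Delta rate B tstar W j d) => [r| |] x_lt.
- by apply: witness; rewrite E lte_fin; move: x_lt; rewrite -EFinD lte_fin; lra.
- by apply: witness; rewrite E ltry.
- by move: x_lt; rewrite addeNy.
Qed.

Section Switch.
Variables (d1 d' : dec) (delta1 delta2 : R) (pi' : R -> dec) (W' : R -> state n -> R).
Hypotheses (d1_F : Fset rate n.+2 (W tstar) d1) (d'_F : Fset rate n.+1 (W tstar) d').
Hypotheses (tstar_delta1 : tstar <= delta1) (delta12 : delta1 < delta2) (delta2B : delta2 <= B).
Hypothesis delta2_Delta : (delta2%:E < tstar%:E + Delta rate B tstar W n.+2 d1)%E.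
Hypothesis pi'_before : forall t, 0 <= t < delta1 -> pi' (B - t) = pi (B - t).
Hypothesis pi'_switch : forall t, delta1 <= t < delta2 -> pi' (B - t) = d'.
Hypothesis W'_sol : value_sol rate B pi' W'.

Lemma switch_action_optimal x : tstar <= x -> x < delta2 -> x <= B -> Fset rate 1 (W x) d'.
Proof.
have [delta stay delta_gt] := Delta_witness delta2_Delta.
have [_ d'_stay] := stays_in_transfer (isT : (0 < 1 <= n.+2)%N) (Fset_sub d1_F) d'_F
  (stays_in_le (isT : (1 <= n.+2)%N) stay).
by move=> xs xd xB; apply: d'_stay xB; rewrite xs /=; lra.
Qed.

Lemma switched_same_drift : {ae mu, forall x, 0 < x < delta2 ->
  Qapp rate (pi' (B - x)) (W x) = Qapp rate (pi (B - x)) (W x)}.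
Proof.
apply: (filterS _ pi_opt); first exact: (ae_filter_ringOfSetsType mu).
move=> x x_opt /andP[x_gt0 xd2]; have xB := le_trans (ltW xd2) delta2B.
have [xd1|d1x] := ltP x delta1; first by rewrite pi'_before ?(ltW x_gt0).
rewrite pi'_switch ?d1x //; apply: Fset1_Qapp.
  exact: switch_action_optimal (le_trans tstar_delta1 d1x) xd2 xB.
by apply: x_opt; rewrite (ltW x_gt0).
Qed.

(* ... so W' = W there, and pi' is optimal along W'. *)
Lemma switched_policy_optimal :
  {ae mu, forall t, 0 <= t < delta2 -> Fset rate 1 (W' t) (pi' (B - t))}.
Proof.
have B0 : 0 <= B := le_trans tstar_ge0 (le_trans tstar_delta1 (le_trans (ltW delta12) delta2B)).
apply: (filterS _ pi_opt); first exact: (ae_filter_ringOfSetsType mu).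
move=> t t_opt /andP[t0 td2]; have tB := le_trans (ltW td2) delta2B.
have -> : W' t = W t.
  apply/funext => s.
  exact: value_sol_unique W_sol W'_sol delta2B switched_same_drift s t B0 t0 td2.
have [td1|d1t] := ltP t delta1; first by rewrite pi'_before ?t0 //; apply: t_opt; rewrite t0.
by rewrite pi'_switch ?d1t //; exact: switch_action_optimal (le_trans tstar_delta1 d1t) td2 tB.
Qed.

End Switch.
End MainArgument.

Theorem mainTheorem2 (R : realType) (n : nat) (Act : state n -> finType)
  (rate : forall s : state n, Act s -> state n -> R)
  (rate_ge0 : forall s a s', s' != s -> 0 <= rate s a s')
  (good_abs : absorbing rate (good n))
  (B : R) (B_gt0 : 0 < B)
  (pi : R -> decision Act) (pi_pol : is_policy B pi)
  (W : R -> state n -> R) (W_sol : value_sol rate B pi W)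
  (pi_opt : {ae lebesgue_measure, forall t : R,
              0 <= t <= B -> Fset rate 1 (W t) (pi (B - t))})
  (tstar : R) (htstar : 0 < tstar <= B)
  (hjump : exists L : set (decision Act), exists2 eps : R, 0 < eps &
      (forall t, 0 <= t -> tstar - eps < t < tstar -> Fset rate n.+2 (W t) = L) /\
      Fset rate n.+2 (W tstar) <> L)
  (hp : exists d1 d2 : decision Act, d1 <> d2 /\
      Fset rate n.+2 (W tstar) d1 /\ Fset rate n.+2 (W tstar) d2) :
  (forall d1 d2 : decision Act,
      Fset rate n.+2 (W tstar) d1 -> Fset rate n.+2 (W tstar) d2 ->
      Delta rate B tstar W n.+2 d1 = Delta rate B tstar W n.+2 d2) /\
  (forall d1 : decision Act, Fset rate n.+2 (W tstar) d1 ->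
   forall (delta1 delta2 : R) (d d' : decision Act)
          (pi' : R -> decision Act) (W' : R -> state n -> R),
     tstar <= delta1 -> delta1 < delta2 -> delta2 <= B ->
     (delta2%:E < tstar%:E + Delta rate B tstar W n.+2 d1)%E ->
     Fset rate n.+1 (W tstar) d ->
     (forall t, delta1 <= t < delta2 -> pi (B - t) = d) ->
     Fset rate n.+1 (W tstar) d' -> d' <> d ->
     is_policy B pi' ->
     (forall t, 0 <= t < delta1 -> pi' (B - t) = pi (B - t)) ->
     (forall t, delta1 <= t < delta2 -> pi' (B - t) = d') ->
     value_sol rate B pi' W' ->
     {ae lebesgue_measure, forall t : R,
        0 <= t < delta2 -> Fset rate 1 (W' t) (pi' (B - t))}).
Proof.
have tstar_ge0 : 0 <= tstar by case/andP: htstar => /ltW.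
split; first by move=> e1 e2; exact: (Delta_same W_sol pi_opt tstar_ge0).
move=> d1 d1_F delta1 delta2 _ d' pi' W' tstar_delta1 delta12 delta2B delta2_Delta
  _ _ d'_F _ _ pi'_before pi'_switch W'_sol.
exact: (switched_policy_optimal W_sol pi_opt tstar_ge0 d1_F d'_F tstar_delta1 delta12 delta2B
  delta2_Delta pi'_before pi'_switch W'_sol).
Qed.
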